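(* Let $m \geqslant 5$ and $k \geqslant 2$ be integers, let $\Delta = \{1,\ldots,m\}^k$, and let $M = S_m \wr S_k$ act on $\Delta$ in product action, identified with a subgroup of $\mathrm{Sym}(\Delta) \cong S_{m^k}$. Let $u = (1\,2\,\cdots\,m) \in S_m$ if $m$ is odd and $u = (1\,2\,\cdots\,m-1)$ if $m$ is even, and let $U = \langle u\rangle$. Let $i \in \{2,\ldots,k\}$ and $r \in \{1,\ldots,m\}$, let $T_r$ be the stabiliser of $r$ in $S_m$, and let $W_i$ be the pointwise stabiliser of $1$ and $i$ in $S_k$. Then there exists $x \in \mathrm{Alt}(\Delta)$ such that \[ M \cap M^{x} = \left(U \times (S_m)^{i-2} \times T_r \times (S_m)^{k-i}\right) \rtimes W_i, \] i.e. $M \cap M^x$ consists of the elements $(v_1,\ldots,v_k)w \in M$ with $v_1 \in U$, $v_i \in T_r$ and $w \in W_i$.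
   Context: In the product action, the base group $(S_m)^k$ acts coordinatewise on $\Delta$ and the top group $S_k$ permutes coordinates. *)

From mathcomp Require Import all_boot all_fingroup alt.
From mathcomp Require Import zify.
Set Implicit Arguments. Unset Strict Implicit. Unset Printing Implicit Defensive.
Local Open Scope group_scope.

(* Points of {1..m} are 'I_m (point j+1 <-> ordinal j); coordinates {1..k}
   are 'I_k (coordinate j+1 <-> ordinal j).  Delta = {1..m}^k. *)
Definition Delta (m k : nat) := {ffun 'I_k -> 'I_m}.

Definition prodact (m k : nat) (v : {ffun 'I_k -> {perm 'I_m}}) (w : {perm 'I_k})
  (d : Delta m k) : Delta m k :=
  [ffun j => v (w^-1 j) (d (w^-1 j))].

Definition Mprod (m k : nat) : {set {perm Delta m k}} :=
  [set p : {perm Delta m k} | [exists v : {ffun 'I_k -> {perm 'I_m}},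
     [exists w : {perm 'I_k}, [forall d, p d == prodact v w d]]]].

Definition ulen (m : nat) := if odd m then m else m.-1.

(* u = (1 2 ... n) with n = ulen m, on 0-based points: j |-> j+1 for j+1 < n,
   n-1 |-> 0, and j fixed for j >= n. *)
Definition ucyc_nat (m j : nat) : nat :=
  if j.+1 == ulen m then 0 else if j.+1 < ulen m then j.+1 else j.

Definition ucyc (m : nat) (j : 'I_m) : 'I_m := insubd j (ucyc_nat m j).

Lemma ulen_le m : ulen m <= m.
Proof. rewrite /ulen; case: (odd m) => //; exact: leq_pred. Qed.

Lemma ucyc_nat_lt m (j : 'I_m) : ucyc_nat m j < m.
Proof.
have := ulen_le m; have := ltn_ord j; rewrite /ucyc_nat.
case: eqP => [_|_]; first lia. case: ifP => H; lia.
Qed.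

Lemma ucyc_inj m : injective (@ucyc m).
Proof.
move=> a b; rewrite /ucyc => /(congr1 val).
rewrite !val_insubd !ucyc_nat_lt => E; apply: val_inj => /=.
have La := ltn_ord a; have Lb := ltn_ord b.
move: E; rewrite /ucyc_nat.
case Ea: (a.+1 == ulen m); case Eb: (b.+1 == ulen m);
case Fa: (a.+1 < ulen m); case Fb: (b.+1 < ulen m); lia.
Qed.

Definition u (m : nat) : {perm 'I_m} := perm (@ucyc_inj m).

Definition U (m : nat) : {set {perm 'I_m}} := <[u m]>.

Definition Tstab (m : nat) (r : 'I_m) : {set {perm 'I_m}} :=
  [set s : {perm 'I_m} | s r == r].

Definition Wstab (k : nat) (i : 'I_k) : {set {perm 'I_k}} :=
  [set w : {perm 'I_k} | [forall j : 'I_k, ((val j == 0) || (j == i)) ==> (w j == j)]].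

Definition Hsub (m k : nat) (i : 'I_k) (r : 'I_m) : {set {perm Delta m k}} :=
  [set p : {perm Delta m k} | [exists v : {ffun 'I_k -> {perm 'I_m}},
     [exists w : {perm 'I_k},
       [&& [forall j : 'I_k, (val j == 0) ==> (v j \in U m)],
           v i \in Tstab r, w \in Wstab i &
           [forall d, p d == prodact v w d]]]]].

From mathcomp Require Import all_boot all_fingroup alt.
From mathcomp Require Import zify.
Set Implicit Arguments. Unset Strict Implicit. Unset Printing Implicit Defensive.
Local Open Scope group_scope.

(* The element x applies u to the first coordinate of exactly those points whose
   i-th coordinate is r.  It is even because u, a cycle of odd length, is a square,
   so x is the square of the analogous element built from a square root of u.
   If g = (v, w) and g' = (v', w') in M satisfy x o g' = g o x, evaluating this
   identity coordinatewise on points that differ in one or two coordinates shows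
   first that w' = w and v' = v, then that w fixes 1 and i, that v_i fixes r, and
   that v_1 commutes with u.  As u is self-centralising, v_1 lies in U.
   Conversely every such g commutes with x. *)

Lemma exists_neq2 m (x y : 'I_m) : 2 < m -> exists2 z : 'I_m, z != x & z != y.
Proof.
move=> m_gt2; have /subsetPn [z _ zxy] : ~~ ([set: 'I_m] \subset [set x; y]).
  apply: contraL m_gt2 => /subset_leq_card; rewrite cardsT card_ord -leqNgt => le_m2.
  by apply: leq_trans le_m2 _; rewrite cards2; case: (x != y).
by move: zxy; rewrite in_set2 negb_or => /andP [zx zy]; exists z.
Qed.

Lemma exists_moved (T : finType) (c : {perm T}) : c != 1 -> exists z, c z != z.
Proof.
move=> c_neq1; apply/existsP; rewrite -negb_forall; apply: contra c_neq1 => /forallP c1.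
by apply/eqP/permP => z; rewrite perm1; apply/eqP.
Qed.

Lemma conjg_invE (T : finType) (g x : {perm T}) d : x ((g ^ x^-1) d) = g (x d).
Proof. by rewrite conjgE invgK !permM permKV. Qed.

Section Cycle.
Variable m : nat.
Local Notation n := (ulen m).

Lemma odd_ulen : 0 < m -> odd n.
Proof. by rewrite /ulen; case: m => [|m'] // _; case: ifP => //= /negbT; rewrite negbK. Qed.

Lemma ulen_gt1 : 2 < m -> 1 < n.
Proof. by rewrite /ulen; case: (odd m) => /=; lia. Qed.

Lemma pred_leq_ulen : m.-1 <= n.
Proof. by rewrite /ulen; case: (odd m) => //; exact: leq_pred. Qed.

Lemma u_val (p : 'I_m) : val (u m p) = ucyc_nat m p.
Proof. by rewrite /u permE /ucyc val_insubd ucyc_nat_lt. Qed.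

Lemma u_lt (p : 'I_m) : p < n -> val (u m p) = p.+1 %% n.
Proof.
move=> p_lt; rewrite u_val /ucyc_nat; case: eqP => [->|ne]; first by rewrite modnn.
by rewrite ifT ?modn_small //; lia.
Qed.

Lemma u_fix (p : 'I_m) : n <= p -> u m p = p.
Proof.
move=> n_le; apply: val_inj; rewrite u_val /ucyc_nat.
by case: eqP => [?|_]; [lia | rewrite ifF //; lia].
Qed.

Lemma uX_lt (p : 'I_m) j : p < n -> val ((u m ^+ j) p) = (p + j) %% n.
Proof.
move=> p_lt; elim: j => [|j IHj]; first by rewrite expg0 perm1 addn0 modn_small.
rewrite expgSr permM u_lt; last by rewrite IHj ltn_mod; lia.
by rewrite IHj -addn1 modnDml -addnA addn1.
Qed.

Lemma uX_fix (p : 'I_m) j : n <= p -> (u m ^+ j) p = p.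
Proof.
by move=> n_le; elim: j => [|j IHj]; rewrite ?expg0 ?perm1 // expgSr permM IHj u_fix.
Qed.

Lemma u_ulen : u m ^+ n = 1.
Proof.
apply/permP => p; rewrite perm1; have [p_lt|n_le] := ltnP p n; last exact: uX_fix.
by apply: val_inj; rewrite uX_lt // modnDr modn_small.
Qed.

Lemma u_sqr : 0 < m -> u m = (u m ^+ n.+1./2) ^+ 2.
Proof.
move=> m_gt0; rewrite -expgM muln2.
have -> : (n.+1./2).*2 = n.+1 by rewrite -[RHS]odd_double_half /= odd_ulen.
by rewrite expgSr u_ulen mul1g.
Qed.

Lemma u_fixE (p : 'I_m) : 1 < n -> (u m p == p) = (n <= p).
Proof.
move=> n_gt1; have [p_lt|n_le] := ltnP p n; last by rewrite u_fix ?eqxx.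
rewrite -val_eqE /= u_lt //; apply/negbTE.
by case: (eqVneq p.+1 n) => [e|ne]; [rewrite e modnn | rewrite modn_small]; lia.
Qed.

Lemma u_neq1 : 2 < m -> u m != 1.
Proof.
move=> m_gt2; have n_gt1 := ulen_gt1 m_gt2.
apply/eqP => /permP /(_ (Ordinal (ltnW m_gt2))).
by rewrite perm1 => /eqP; rewrite u_fixE //= => ?; lia.
Qed.

(* s permutes the fixed points of u, of which there is at most one, and on the
   n-cycle it agrees with the power of u sending 0 to s 0. *)
Lemma commute_u_cycle (s : {perm 'I_m}) : 2 < m -> commute s (u m) -> s \in U m.
Proof.
move=> m_gt2 su; have n_gt1 := ulen_gt1 m_gt2.
have us p : u m (s p) = s (u m p) by rewrite -!permM su.
have s_fixE p : (n <= s p) = (n <= p) by rewrite -!u_fixE // us (inj_eq perm_inj).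
pose z : 'I_m := Ordinal (ltn_trans (isT : 0 < 2) m_gt2).
have sz_lt : s z < n by rewrite ltnNge s_fixE -ltnNge /=; lia.
apply/cycleP; exists (s z); apply/permP => p; have [p_lt|n_le] := ltnP p n.
- have -> : p = (u m ^+ p) z by apply: val_inj; rewrite uX_lt //= ?modn_small; lia.
  rewrite -permM -(commuteX p su) permM; apply: val_inj.
  by rewrite !uX_lt //= ?add0n ?(modn_small p_lt) 1?addnC //; lia.
- have n_le_sp : n <= s p by rewrite s_fixE.
  rewrite uX_fix //; apply: val_inj => /=.
  by move: (ltn_ord p) (ltn_ord (s p)) (pred_leq_ulen); lia.
Qed.

End Cycle.

Lemma prodactE m k v w (d : Delta m k) j : prodact v w d j = v (w^-1 j) (d (w^-1 j)).
Proof. by rewrite ffunE. Qed.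

Definition upd m k (d : Delta m k) (j : 'I_k) (y : 'I_m) : Delta m k :=
  [ffun l => if l == j then y else d l].

Lemma updE m k (d : Delta m k) j y l : upd d j y l = if l == j then y else d l.
Proof. by rewrite ffunE. Qed.

Section Twist.
Variables (m k : nat) (a b : 'I_k) (r : 'I_m).

(* Without the guard [a != b] the map would not be injective when [a = b]. *)
Definition twist_fun (c : {perm 'I_m}) (d : Delta m k) : Delta m k :=
  if (d b == r) && (a != b) then [ffun j => if j == a then c (d j) else d j] else d.

Lemma twist_fun_id c (d : Delta m k) : d b != r -> twist_fun c d = d.
Proof. by rewrite /twist_fun => /negbTE ->. Qed.

Lemma twist_fun_ne c (d : Delta m k) j : j != a -> twist_fun c d j = d j.
Proof. by rewrite /twist_fun => /negbTE ja; case: ifP => // _; rewrite ffunE ja. Qed.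

Lemma twist_fun_b c (d : Delta m k) : twist_fun c d b = d b.
Proof.
by rewrite /twist_fun; case: ifP => // /andP [_ ab]; rewrite ffunE eq_sym (negbTE ab).
Qed.

Lemma twist_fun_a (ab : a != b) c (d : Delta m k) :
  twist_fun c d a = if d b == r then c (d a) else d a.
Proof. by rewrite /twist_fun ab andbT; case: ifP; rewrite ?ffunE ?eqxx. Qed.

Lemma twist_fun_inj (c : {perm 'I_m}) : injective (twist_fun c).
Proof.
move=> d e de; have de_b : d b = e b by rewrite -(twist_fun_b c d) de twist_fun_b.
apply/ffunP => j; have [->|ja] := eqVneq j a; last first.
  by rewrite -(twist_fun_ne c d ja) de twist_fun_ne.
have [ab|/negbTE ab] := eqVneq a b; first by rewrite ab.
move/ffunP/(_ a): de; rewrite !twist_fun_a ?ab // de_b.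
by case: (e b == r) => //; apply: perm_inj.
Qed.

Definition twist (c : {perm 'I_m}) : {perm Delta m k} := perm (@twist_fun_inj c).

Lemma twistE c (d : Delta m k) : twist c d = twist_fun c d.
Proof. exact: permE. Qed.

Lemma twistM (c c' : {perm 'I_m}) : twist c * twist c' = twist (c * c').
Proof.
apply/permP => d; rewrite permM !twistE.
have [ab|ab] := eqVneq a b; first by rewrite /twist_fun ab eqxx !andbF.
apply/ffunP => j; have [->|ja] := eqVneq j a; last by rewrite !twist_fun_ne.
by rewrite !twist_fun_a // twist_fun_b; case: (d b == r); rewrite ?permM.
Qed.

Lemma twist_sqr_Alt (s : {perm 'I_m}) : twist (s ^+ 2) \in Alt (Delta m k).
Proof. by rewrite Alt_even -twistM odd_permM addbb. Qed.

Hypotheses (m_gt2 : 2 < m) (neq_ab : a != b).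

Lemma coord_fun_eq (f g : 'I_m -> 'I_m) (j j' : 'I_k) : injective f ->
  (forall d : Delta m k, d b != r -> f (d j) = g (d j')) -> j = j'.
Proof.
move=> f_inj fg; apply/eqP; apply: contraT => jj'.
have [z0 z0r _] := exists_neq2 r r m_gt2; have [y yr yz0] := exists_neq2 r z0 m_gt2.
pose d : Delta m k := [ffun=> z0].
have db : d b != r by rewrite ffunE.
have udb : upd d j y b != r by rewrite updE ffunE; case: ifP.
move: (fg _ db) (fg _ udb); rewrite !updE eqxx eq_sym (negbTE jj') /d !ffunE.
by move=> <- /f_inj yz; rewrite yz eqxx in yz0.
Qed.

Section Conjugation.
Variables (c : {perm 'I_m}) (v v' : {ffun 'I_k -> {perm 'I_m}}) (w w' : {perm 'I_k}).
Hypothesis c_neq1 : c != 1.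
Hypothesis twist_conj :
  forall d, twist_fun c (prodact v' w' d) = prodact v w (twist_fun c d).

Lemma twist_conj_ne (d : Delta m k) j : j != a ->
  v' (w'^-1 j) (d (w'^-1 j)) = v (w^-1 j) (twist_fun c d (w^-1 j)).
Proof.
move=> ja; have /ffunP/(_ j) := twist_conj d.
by rewrite (twist_fun_ne _ _ ja) !prodactE.
Qed.

Lemma invw_conj j : j != a -> w'^-1 j = w^-1 j.
Proof.
move=> ja; apply/esym/(@coord_fun_eq (v (w^-1 j)) (v' (w'^-1 j))) => [|d db].
  exact: perm_inj.
by rewrite (twist_conj_ne d ja) twist_fun_id.
Qed.

Lemma invw_neq_a j : j != a -> w^-1 j != a.
Proof.
move=> ja; apply/eqP => wja; have [z cz] := exists_moved c_neq1.
have [z0 z0r _] := exists_neq2 r r m_gt2.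
have Ej (d : Delta m k) : v' a (d a) = v a (twist_fun c d a).
  by rewrite -wja -(invw_conj ja) twist_conj_ne // invw_conj.
move: (Ej (upd [ffun=> r] a z)) (Ej (upd [ffun=> z0] a z)).
rewrite !(twist_fun_a neq_ab) !updE eqxx [b == a]eq_sym (negbTE neq_ab) !ffunE eqxx.
by rewrite (negbTE z0r) => -> /perm_inj /eqP; rewrite (negbTE cz).
Qed.

Lemma w_a : w a = a.
Proof. by apply/eqP; apply: contraT => /invw_neq_a; rewrite permK eqxx. Qed.

Lemma w_conj : w' = w.
Proof.
have w'_a : w' a = a.
  apply/eqP; apply: contraT => w'a.
  by have := invw_neq_a w'a; rewrite -invw_conj // permK eqxx.
apply: invg_inj; apply/permP => j; have [->|ja] := eqVneq j a; last exact: invw_conj.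
by rewrite -{1}w'_a -{2}w_a !permK.
Qed.

Lemma v_conj_ne j : j != a -> v' j = v j.
Proof.
move=> ja; have wja : w j != a by rewrite -[X in _ != X]w_a (inj_eq perm_inj).
apply/permP => p; move: (twist_conj_ne [ffun=> p] wja).
by rewrite w_conj permK twist_fun_ne // !ffunE.
Qed.

Local Notation alpha := (w^-1 b).

Lemma alpha_neq_a : alpha != a.
Proof. by apply: invw_neq_a; rewrite eq_sym. Qed.

Lemma twist_conj_a (d : Delta m k) :
  (if v alpha (d alpha) == r then c (v' a (d a)) else v' a (d a))
  = v a (if d b == r then c (d a) else d a).
Proof.
have invw_a : w^-1 a = a by rewrite -{1}w_a permK.
move/ffunP/(_ a): (twist_conj d).
rewrite !prodactE w_conj invw_a !(twist_fun_a neq_ab) !prodactE invw_a.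
by rewrite (v_conj_ne alpha_neq_a).
Qed.

Lemma v_conj_a : v' a = v a.
Proof.
have [z1 z1r z1v] := exists_neq2 r ((v alpha)^-1 r) m_gt2.
have vz1 : (v alpha z1 == r) = false.
  by apply/negbTE; apply: contra z1v => /eqP <-; rewrite permK.
apply/permP => p; move: (twist_conj_a (upd [ffun=> z1] a p)).
rewrite !updE eqxx (negbTE alpha_neq_a) [b == a]eq_sym (negbTE neq_ab) !ffunE.
by rewrite vz1 (negbTE z1r).
Qed.

Lemma twist_conj_guard (d : Delta m k) : (v alpha (d alpha) == r) = (d b == r).
Proof.
have [z cz] := exists_moved c_neq1.
have E x : (if v alpha (d alpha) == r then c (v a x) else v a x)
           = v a (if d b == r then c x else x).
  move: (twist_conj_a (upd d a x)).
  by rewrite !updE eqxx (negbTE alpha_neq_a) [b == a]eq_sym (negbTE neq_ab) v_conj_a.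
case: (v alpha (d alpha) == r) (d b == r) (E z) (E ((v a)^-1 z)) => [] [] //.
- by move=> _; rewrite permKV => /eqP; rewrite (negbTE cz).
- by move=> /perm_inj /eqP; rewrite eq_sym (negbTE cz).
Qed.

Lemma invw_b : w^-1 b = b.
Proof.
have [z1 _ z1v] := exists_neq2 r ((v alpha)^-1 r) m_gt2.
apply/eqP; apply: contraT => alpha_b.
move: (twist_conj_guard (upd [ffun=> z1] b r)); rewrite !updE !eqxx (negbTE alpha_b) ffunE.
by move=> /eqP vz1; move: z1v; rewrite -vz1 permK eqxx.
Qed.

Lemma v_b_fix : v b r = r.
Proof. by move: (twist_conj_guard [ffun=> r]); rewrite invw_b !ffunE eqxx => /eqP. Qed.

Lemma commute_v_a : commute (v a) c.
Proof.
apply/permP => p; move: (twist_conj_a (upd [ffun=> r] a p)).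
rewrite invw_b !updE eqxx [b == a]eq_sym (negbTE neq_ab) !ffunE v_b_fix eqxx v_conj_a.
by move=> cv; rewrite !permM.
Qed.

Lemma twist_conj_prodact : [/\ commute (v a) c, v b r = r, w a = a & w b = b].
Proof.
by split; [exact: commute_v_a | exact: v_b_fix | exact: w_a | rewrite -{1}invw_b permKV].
Qed.

End Conjugation.

Lemma twist_commute_prodact (c : {perm 'I_m})
    (v : {ffun 'I_k -> {perm 'I_m}}) (w : {perm 'I_k}) :
  commute (v a) c -> v b r = r -> w a = a -> w b = b ->
  forall d, twist_fun c (prodact v w d) = prodact v w (twist_fun c d).
Proof.
move=> cva vbr wa wb d.
have invw_a : w^-1 a = a by rewrite -{1}wa permK.
have invw_b : w^-1 b = b by rewrite -{1}wb permK.
have vb_r : (v b (d b) == r) = (d b == r) by rewrite -{1}vbr (inj_eq perm_inj).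
apply/ffunP => j; have [->|ja] := eqVneq j a.
- rewrite (twist_fun_a neq_ab) !prodactE invw_a invw_b (twist_fun_a neq_ab) vb_r.
  by case: (d b == r); rewrite // -!permM cva.
- rewrite (twist_fun_ne _ _ ja) !prodactE twist_fun_ne //.
  by rewrite -[X in _ != X]invw_a (inj_eq perm_inj).
Qed.

End Twist.

Lemma MprodP m k (g : {perm Delta m k}) :
  reflect (exists v w, forall d, g d = @prodact m k v w d) (g \in Mprod m k).
Proof.
rewrite inE; apply: (iffP existsP) => [[v /existsP [w /forallP gE]] | [v [w gE]]].
  by exists v, w => d; apply/eqP.
by exists v; apply/existsP; exists w; apply/forallP => d; apply/eqP.
Qed.

Lemma HsubP m k (i a0 : 'I_k) (r : 'I_m) (g : {perm Delta m k}) : val a0 = 0 ->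
  reflect (exists (v : {ffun 'I_k -> {perm 'I_m}}) (w : {perm 'I_k}),
             [/\ v a0 \in U m, v i r = r, w a0 = a0, w i = i
                & forall d, g d = prodact v w d])
          (g \in Hsub i r).
Proof.
move=> a0_0; have a0E j : (val j == 0) = (j == a0) by rewrite -val_eqE a0_0.
rewrite inE; apply: (iffP existsP) => [[v /existsP [w]] | [v [w [va0 vir wa0 wi gE]]]].
  rewrite !inE => /and4P [/forallP vU /eqP vir /forallP wW /forallP gE].
  exists v, w; split.
  - by apply: (implyP (vU a0)); rewrite a0_0.
  - exact: vir.
  - by apply/eqP/(implyP (wW a0)); rewrite a0_0.
  - by apply/eqP/(implyP (wW i)); rewrite eqxx orbT.
  - by move=> d; apply/eqP.
exists v; apply/existsP; exists w; rewrite !inE; apply/and4P; split.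
- by apply/forallP => j; rewrite a0E; apply/implyP => /eqP ->.
- by apply/eqP.
- by apply/forallP => j; rewrite a0E; apply/implyP => /orP [] /eqP ->; apply/eqP.
- by apply/forallP => d; apply/eqP.
Qed.

Theorem lemma4p3 (m k : nat) (hm : 5 <= m) (hk : 2 <= k)
  (i : 'I_k) (hi : 1 <= val i) (r : 'I_m) :
  exists2 x : {perm Delta m k}, x \in Alt (Delta m k) &
    Mprod m k :&: (Mprod m k :^ x) = Hsub i r.
Proof.
have m_gt2 : 2 < m by lia.
pose a0 : 'I_k := Ordinal (leq_ltn_trans (leq0n i) (ltn_ord i)).
have a0i : a0 != i by rewrite -val_eqE /= eq_sym -lt0n.
pose x := twist a0 i r (u m).
exists x; first by rewrite /x (u_sqr (ltnW (ltnW m_gt2))) twist_sqr_Alt.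
apply/setP => g; rewrite inE mem_conjg.
apply/andP/(HsubP _ _ _ (erefl : val a0 = 0)).
- move=> [/MprodP [v [w gE]] /MprodP [v' [w' hE]]].
  have conj d :
      twist_fun a0 i r (u m) (prodact v' w' d) = prodact v w (twist_fun a0 i r (u m) d).
    by rewrite -hE -gE -!twistE conjg_invE.
  have [cva vir wa0 wi] := twist_conj_prodact m_gt2 a0i (u_neq1 m_gt2) conj.
  by exists v, w; split => //; apply: commute_u_cycle.
- move=> [v [w [va0 vir wa0 wi gE]]].
  have gM : g \in Mprod m k by apply/MprodP; exists v, w.
  split=> //; suff -> : g ^ x^-1 = g by [].
  apply/permP => d; apply: (@perm_inj _ x).
  rewrite conjg_invE !twistE !gE twist_commute_prodact //.
  by move: va0; rewrite /U => /cycleP [t ->]; exact: (commuteX2 t 1 (commute_refl (u m))).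
Qed.
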